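(* Fix $n\ge 1$ and a coalition size $s\in\{1,\ldots,n\}$. Let the periodic canonical increment arrays of size $s$ be listed in some fixed order as $\underline{t}_1,\ldots,\underline{t}_K$ (where $K=|\mathcal{P}(n,s)|$), let $d_j=n\,\pi(\underline{t}_j)/s$, and let $h_1=0$, $h_j=\sum_{i=1}^{j-1}d_i$. Say agent $x\in\{1,\ldots,n\}$ is designated for $\underline{t}_j$ iff $(x-1-h_j)\bmod n<d_j$ (with $\bmod$ taking values in $\{0,\ldots,n-1\}$). Define the allocation of agent $x$ at size $s$ as \[CV_x^s=\{C(x,\underline{t}):\underline{t}\in\mathcal{A}(n,s)\}\cup\{C(x,\underline{t}_j):1\le j\le K,\ x\text{ designated for }\underline{t}_j\}.\] Then for every agent $x\in\{1,\ldots,n\}$, \[\left\lfloor\frac{\binom{n}{s}}{n}\right\rfloor\le|CV_x^s|\le\left\lceil\frac{\binom{n}{s}}{n}\right\rceil,\] so the allocations of any two agents at size $s$ differ by at most one.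
   Context: Agent identifiers are $\{1,\ldots,n\}$, arithmetic on identifiers is modulo $n$ with representatives in $\{1,\ldots,n\}$ (a value $0$ is replaced by $n$). An increment array (IA) of size $s$ for $n$ agents is a tuple $\underline{t}=\langle t_0,\ldots,t_{s-1}\rangle$ of non-negative integers with $\sum t_i=n-s$. Cumulative increments: $\varphi_1=0$, $\varphi_i=\sum_{k=0}^{i-2}(t_k+1)$ for $2\le i\le s+1$. The coalition generated from $x$ is $C(x,\underline{t})=\{x\}\cup\bigcup_{i=2}^{s}\{(x+\varphi_i)\bmod n\}$ (residues in $\{1,\ldots,n\}$). Two IAs of the same size are equivalent ($\approx$) if one is a circular shift of the other; the canonical representative of an equivalence class is its lexicographically smallest member. $\mathcal{E}(n,s)$ is the set of canonical representatives of IAs of size $s$. The period $\pi(\underline{t})$ is the least $p\in\{1,\ldots,s\}$ such that $\underline{t}$ consists of $s/p$ identical consecutive copies of its first $p$ entries. $\mathcal{A}(n,s)=\{\underline{t}\in\mathcal{E}(n,s):\pi(\underline{t})=s\}$ (aperiodic) and $\mathcal{P}(n,s)=\{\underline{t}\in\mathcal{E}(n,s):\pi(\underline{t})<s\}$ (periodic). *)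

(* Agents are natural numbers in {1,...,n}. *)
From mathcomp Require Import all_boot all_order all_algebra.
Set Implicit Arguments. Unset Strict Implicit. Unset Printing Implicit Defensive.

Definition modrep (n y : nat) : nat := if y %% n == 0 then n else y %% n.

Fixpoint comps (k m : nat) : seq (seq nat) :=
  match k with
  | 0 => if m == 0 then [:: [::]] else [::]
  | k'.+1 => flatten [seq [seq a :: c | c <- comps k' (m - a)] | a <- iota 0 m.+1]
  end.

Definition is_IA (n s : nat) (t : seq nat) : bool :=
  (size t == s) && (sumn t == n - s).

Fixpoint lexle (a b : seq nat) : bool :=
  match a, b with
  | [::], _ => true
  | _ :: _, [::] => false
  | x :: a', y :: b' => (x < y) || ((x == y) && lexle a' b')
  end.

Definition canonical (t : seq nat) : bool :=
  all (fun i => lexle t (rot i t)) (iota 0 (size t)).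

Definition E_set (n s : nat) : seq (seq nat) :=
  [seq t <- comps s (n - s) | is_IA n s t && canonical t].

Definition has_period (t : seq nat) (p : nat) : bool :=
  (p %| size t) && (t == flatten (nseq (size t %/ p) (take p t))).

Definition period (t : seq nat) : nat :=
  head (size t) [seq p <- iota 1 (size t) | has_period t p].

Definition A_set (n s : nat) : seq (seq nat) :=
  [seq t <- E_set n s | period t == s].
Definition P_set (n s : nat) : seq (seq nat) :=
  [seq t <- E_set n s | period t < s].

Definition phi (t : seq nat) (i : nat) : nat :=
  sumn [seq (nth 0 t k).+1 | k <- iota 0 i.-1].

(* coalition C(x,t), represented canonically as a sorted duplicate-free list *)
Definition coalition (n x : nat) (t : seq nat) : seq nat :=
  sort leq (undup (x :: [seq modrep n (x + phi t i) | i <- iota 2 (size t).-1])).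

Definition dval (n s : nat) (t : seq nat) : nat := (n * period t) %/ s.

(* h_j = sum_{i<j} d_i (0-based j) *)
Definition hval (n s : nat) (ts : seq (seq nat)) (j : nat) : nat :=
  sumn [seq dval n s (nth [::] ts i) | i <- iota 0 j].

Definition designated (n s : nat) (ts : seq (seq nat)) (x j : nat) : bool :=
  (((x%:Z - 1 - (hval n s ts j)%:Z) %% n%:Z)%Z < (dval n s (nth [::] ts j))%:Z)%R.

Definition CV (n s : nat) (ts : seq (seq nat)) (x : nat) : seq (seq nat) :=
  undup ([seq coalition n x t | t <- A_set n s] ++
         [seq coalition n x (nth [::] ts j) | j <- iota 0 (size ts) & designated n s ts x j]).

Definition ceil_div (a b : nat) : nat := (a + b.-1) %/ b.

From mathcomp Require Import all_boot all_order all_algebra zify.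
Import Order.TTheory.
Set Implicit Arguments. Unset Strict Implicit. Unset Printing Implicit Defensive.

(* Every increment array of size s rotates to exactly one canonical array e,
   and the rotation class of e has pi(e) elements; hence the periods of the
   arrays in E(n,s) add up to the number C(n-1,s-1) of increment arrays, and
   the d_e = n pi(e) / s add up to C(n,s).  Aperiodic arrays have d = n, so
   C(n,s) = n |A(n,s)| + H, where H is the sum of the d_j of the periodic ones.
   Agent x is designated for t_j exactly when x - 1 lies, modulo n, in the
   block [h_j, h_j + d_j) of length d_j <= n; these blocks tile [0, H), so x is
   designated H div n or H div n + 1 times.  Finally C(x, -) is injective on
   increment arrays, because a coalition determines the sorted offsets phi_i,
   and these determine the array. *)

Lemma compsS k m :
  comps k.+1 m = [seq a :: c | a <- iota 0 m.+1, c <- comps k (m - a)].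
Proof. by []. Qed.

Lemma mem_comps k m t : (t \in comps k m) = (size t == k) && (sumn t == m).
Proof.
elim: k m t => [|k IH] m t.
  by case: t => [|a t]; case: m => [|m]; rewrite ?inE ?andbF.
rewrite compsS; apply/allpairsPdep/idP => [[a [c [am cI ->]]]|].
  move: am cI; rewrite mem_iota IH => am /andP[/eqP sc /eqP cm] /=.
  by rewrite sc eqxx; apply/eqP; lia.
case: t => [|a c] // /andP[sc /eqP sm]; exists a, c; split=> //.
  by rewrite mem_iota; move: sm => /=; lia.
by rewrite IH -eqSS sc; apply/eqP; move: sm => /=; lia.
Qed.

Lemma uniq_comps k m : uniq (comps k m).
Proof.
elim: k m => [|k IH] m; first by case: m.
rewrite compsS; apply: allpairs_uniq_dep => [||[a c] [b d] _ _ /= [-> ->]] //.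
exact: iota_uniq.
Qed.

Lemma size_compsSS k m :
  size (comps k.+1 m.+1) = size (comps k m.+1) + size (comps k.+1 m).
Proof.
rewrite !compsS !size_allpairs_dep -[iota 0 m.+2]/([:: 0] ++ iota (1 + 0) m.+1).
rewrite iotaDl map_cat sumn_cat -map_comp; congr (_ + _).
by rewrite /= subn0 addn0.
Qed.

Lemma size_comps k m : size (comps k.+1 m) = 'C(m + k, k).
Proof.
elim: k m => [|k IH]; elim=> [|m IHm] //.
- by rewrite size_compsSS IHm !bin0.
- by rewrite compsS size_allpairs_dep /= IH !binn.
- by rewrite size_compsSS IH IHm !addSn addnS binS addnC.
Qed.

Lemma lexleE (a b : seq nat) : lexle a b = (a <= b :> seqlexi nat)%O.
Proof.
elim: a b => [|x a IH] [|y b] //=.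
by rewrite [RHS]lexi_cons IH /= !leEnat; case: ltngtP.
Qed.

Section Rotations.
Variable T : eqType.
Implicit Types t u : seq T.

Definition rotations t := [seq rot i t | i <- iota 0 (size t)].

Lemma mem_rot_rotations i t : 0 < size t -> rot i t \in rotations t.
Proof.
move=> t0; case: (ltnP i (size t)) => [it|/rot_oversize->].
  by apply: map_f; rewrite mem_iota.
by apply/mapP; exists 0; rewrite ?rot0 // mem_iota.
Qed.

Lemma rotationsP t u : 0 < size t -> reflect (exists i, u = rot i t) (u \in rotations t).
Proof.
move=> t0; apply: (iffP mapP) => [[i _ ->]|[i ->]]; first by exists i.
by apply/mapP/mem_rot_rotations.
Qed.

Lemma mem_rotations_rot i t u : u \in rotations (rot i t) -> u \in rotations t.
Proof.
case: (posnP (size t)) => [/size0nil-> //|t0].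
move=> /rotationsP; rewrite size_rot => /(_ t0) [j ->].
by rewrite rot_rot_add mem_rot_rotations.
Qed.

End Rotations.

Lemma canonicalE t : canonical t = all (fun u => t <= u :> seqlexi nat)%O (rotations t).
Proof. by rewrite /canonical all_map; apply: eq_all => i; rewrite /= lexleE. Qed.

Lemma exists_canonical_rot t : 0 < size t -> exists i, canonical (rot i t).
Proof.
move=> t0; pose i0 : 'I_(size t) := Ordinal t0.
pose F (i : 'I_(size t)) : seqlexi nat := rot i t.
case: (@arg_minP _ _ _ i0 xpredT F) => // i _ min_i.
exists i; rewrite canonicalE; apply/allP => u /mem_rotations_rot /mapP[j].
by rewrite mem_iota => /= jt ->; exact: (min_i (Ordinal jt)).
Qed.

Lemma canonical_rot_eq i e : canonical e -> canonical (rot i e) -> rot i e = e.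
Proof.
case: (posnP (size e)) => [/size0nil-> //|e0].
rewrite !canonicalE => /allP ce /allP cr; apply: (@le_anti _ (seqlexi nat)).
rewrite ce ?mem_rot_rotations // cr //.
by rewrite -[X in X \in _](rotK i e) mem_rot_rotations // size_rot.
Qed.

Lemma flatten_nseq_catC (T : Type) (b : seq T) k :
  flatten (nseq k b) ++ b = b ++ flatten (nseq k b).
Proof. by elim: k => [|k IH] /=; rewrite ?cats0 // -catA IH. Qed.

Lemma catC_flatten_nseq (T : eqType) (b r : seq T) k :
  size r = k * size b -> r ++ b = b ++ r -> r = flatten (nseq k b).
Proof.
elim: k r => [|k IH] r sr rb; first exact/size0nil.
have br : take (size b) r = b.
  have := congr1 (take (size b)) rb.
  by rewrite takel_cat ?sr ?mulSn ?leq_addr // take_size_cat.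
move: sr rb; rewrite -(cat_take_drop (size b) r) br; set r' := drop _ r => sr rb.
congr (_ ++ _); apply: IH.
  by move: sr; rewrite size_cat mulSn => /addnI.
by apply/eqP; move/eqP: rb; rewrite -catA eqseq_cat // eqxx.
Qed.

Lemma has_periodE e q : 0 < q -> q %| size e -> has_period e q = (rot q e == e).
Proof.
move=> q0 qe; rewrite /has_period qe /=; case/dvdnP: qe => k ek.
rewrite ek mulnK //; case: k ek => [/size0nil-> //|k ek].
have sb : size (take q e) = q by rewrite size_takel // ek leq_pmull.
rewrite /rot; set b := take q e; set r := drop q e.
have -> : e = b ++ r by rewrite cat_take_drop.
rewrite /= eqseq_cat // eqxx /=.
apply/eqP/eqP => [->|]; first exact: flatten_nseq_catC.
by apply: catC_flatten_nseq; rewrite size_drop sb ek mulSn addKn.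
Qed.

Lemma head_filter (T : Type) (P : pred T) d s : head d (filter P s) = nth d s (find P s).
Proof. by elim: s => //= x s IH; case: (P x). Qed.

Lemma head_filter_iota (P : pred nat) a n d : has P (iota a n) ->
  let x := head d (filter P (iota a n)) in
  [/\ a <= x < a + n, P x & forall y, a <= y < x -> ~~ P y].
Proof.
move=> hasP; have fn : find P (iota a n) < n by rewrite -{2}(size_iota a n) -has_find.
rewrite /= head_filter nth_iota //; split; first lia.
  by rewrite -(nth_iota d a fn) nth_find.
move=> y ay; rewrite -(subnKC (proj1 (andP ay))) -(nth_iota d a (n := n)); last lia.
by rewrite before_find //; lia.
Qed.

Lemma period_spec (e : seq nat) : 0 < size e ->
  [/\ 0 < period e <= size e, has_period e (period e)
    & forall q, 0 < q < period e -> ~~ has_period e q].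
Proof.
move=> e0; have : has (has_period e) (iota 1 (size e)).
  apply/hasP; exists (size e); first by rewrite mem_iota; lia.
  by rewrite has_periodE // rot_size.
by case/(@head_filter_iota _ _ _ (size e)) => *; split.
Qed.

Lemma rot_period (e : seq nat) : rot (period e) e = e.
Proof.
case: (posnP (size e)) => [/size0nil-> //|e0].
have [/andP[p0 _] pe _] := period_spec e0.
by apply/eqP; rewrite -has_periodE //; case/andP: pe.
Qed.

Section RotFixed.
Variables (T : Type) (e : seq T).

Lemma rot_fixed_subn a b : a <= b <= size e -> rot a e = e -> rot b e = e ->
  rot (b - a) e = e.
Proof. by case/andP=> ab be ra rb; rewrite -{1}ra -rotD subnK. Qed.

Lemma rot_fixed_mulnl p k : rot p e = e -> k * p <= size e -> rot (k * p) e = e.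
Proof.
move=> rp; elim: k => [|k IH] kp; first exact: rot0.
by rewrite mulSn rotD // IH ?rp //; apply: leq_trans kp; rewrite mulSn leq_addl.
Qed.

Lemma rot_fixed_modn p i : 0 < p -> rot p e = e -> i <= size e ->
  rot i e = rot (i %% p) e.
Proof.
move=> p0 rp ie; rewrite {1}(divn_eq i p) addnC rotD; last by rewrite addnC -divn_eq.
by rewrite rot_fixed_mulnl // (leq_trans (leq_trunc_div i p)).
Qed.

Lemma rot_fixed_dvdn p b : 0 < p -> rot p e = e ->
  (forall q, 0 < q < p -> rot q e <> e) -> b <= size e -> rot b e = e -> p %| b.
Proof.
move=> p0 rp pmin; elim/ltn_ind: b => b IH be rb.
case: (ltnP b p) => [bp|pb].
  case: (posnP b) => [->|b0]; first exact: dvdn0.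
  by case: (pmin b _ rb); rewrite b0 bp.
rewrite -(subnK pb) dvdn_add ?dvdnn // IH ?rot_fixed_subn ?pb //; lia.
Qed.

End RotFixed.

(* The least positive rotation fixing [e] divides [size e], so it is a period. *)
Lemma rot_neq_period (e : seq nat) q : 0 < size e -> 0 < q < period e -> rot q e != e.
Proof.
move=> e0 qp; apply/eqP=> rq.
have exP : exists r, (0 < r) && (rot r e == e) by exists q; rewrite rq eqxx andbT; lia.
case: (ex_minnP exP) => r /andP[r0 /eqP rr] rmin.
have rq' : r <= q by apply: rmin; rewrite rq eqxx andbT; lia.
have re : r %| size e.
  apply: rot_fixed_dvdn rr _ _ (rot_size e) => // q' /andP[q'0 q'r] rq'e.
  by move: (rmin q'); rewrite q'0 rq'e eqxx => /(_ isT); lia.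
have [_ _ aperiodic] := period_spec e0.
suff : ~~ has_period e r by rewrite has_periodE // rr eqxx.
by apply: aperiodic; lia.
Qed.

Lemma uniq_rotations_period (e : seq nat) : 0 < size e ->
  uniq [seq rot i e | i <- iota 0 (period e)].
Proof.
move=> e0; have [/andP[p0 pe] _ _] := period_spec e0.
rewrite map_inj_in_uniq ?iota_uniq // => i j; rewrite !mem_iota /= => ip jp.
wlog ij : i j ip jp / i <= j => [wl eij|].
  by case: (leqP i j) => [|/ltnW] h; [apply: wl | apply/esym/wl].
move=> eij; apply/eqP; rewrite eqn_leq ij /=; apply: contraT; rewrite -ltnNge => ji.
have fix_ji : rot (j - i) e = e.
  by apply: (@rot_inj i); rewrite rot_rot -rotD ?subnK ?eij //; lia.
by move: (rot_neq_period (q := j - i) e0); rewrite fix_ji eqxx; apply; lia.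
Qed.

Lemma size_undup_rotations (e : seq nat) : 0 < size e -> size (undup (rotations e)) = period e.
Proof.
move=> e0; have [/andP[p0 pe] _ _] := period_spec e0; have rp := rot_period e.
rewrite -[period e in RHS](size_iota 0) -(size_map (rot^~ e)).
apply/perm_size/uniq_perm; rewrite ?undup_uniq ?uniq_rotations_period // => u.
rewrite mem_undup; apply/mapP/mapP => -[i]; rewrite !mem_iota /= => ie ->.
  by exists (i %% period e); rewrite ?mem_iota ?ltn_pmod // -rot_fixed_modn // ltnW.
by exists i; rewrite // mem_iota; lia.
Qed.

Lemma mem_E_set n s t :
  (t \in E_set n s) = [&& size t == s, sumn t == n - s & canonical t].
Proof.
rewrite mem_filter mem_comps /is_IA.
by case: (size t == s); case: (sumn t == n - s); case: (canonical t).
Qed.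

Lemma uniq_E_set n s : uniq (E_set n s).
Proof. exact/filter_uniq/uniq_comps. Qed.

Lemma count_rotations_comps n s e : e \in E_set n s -> 0 < s ->
  count (mem (rotations e)) (comps s (n - s)) = period e.
Proof.
rewrite mem_E_set => /and3P[/eqP es /eqP en _] s0.
rewrite -size_undup_rotations ?es // -size_filter; apply/perm_size/uniq_perm.
- exact/filter_uniq/uniq_comps.
- exact: undup_uniq.
move=> u; rewrite mem_filter mem_undup andb_idr // => /mapP[i _ ->].
by rewrite mem_comps size_rot sumn_rot es en !eqxx.
Qed.

Lemma count_E_set_rotations n s t : t \in comps s (n - s) -> 0 < s ->
  count (fun e => t \in rotations e) (E_set n s) = 1.
Proof.
rewrite mem_comps => /andP[/eqP ts /eqP tn] s0.
have [i ct] := exists_canonical_rot (ltac:(by rewrite ts) : 0 < size t).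
have tE : rot i t \in E_set n s by rewrite mem_E_set size_rot sumn_rot ts tn ct !eqxx.
transitivity (count_mem (rot i t) (E_set n s)); last by rewrite count_uniq_mem ?uniq_E_set ?tE.
apply: eq_in_count => e eE /=.
apply/idP/eqP=> [|->]; last first.
  by rewrite -[X in X \in _](rotK i t) mem_rot_rotations // size_rot ts.
have e0 : 0 < size e by move: eE; rewrite mem_E_set => /andP[/eqP-> _].
move=> /(rotationsP _ e0) [j tj]; move: eE ct; rewrite mem_E_set tj rot_rot_add.
by case/and3P=> _ _ ce /(canonical_rot_eq ce).
Qed.

Lemma sumn_count_swap (T U : Type) (R : T -> U -> bool) (s : seq T) (u : seq U) :
  sumn [seq count (R x) u | x <- s] = sumn [seq count (R^~ y) s | y <- u].
Proof.
rewrite !sumnE !big_map.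
under eq_bigr do rewrite -sumn_count sumnE big_map.
under [RHS]eq_bigr do rewrite -sumn_count sumnE big_map.
exact: exchange_big.
Qed.

Lemma sum_period_E_set n s : 0 < s ->
  sumn [seq period e | e <- E_set n s] = size (comps s (n - s)).
Proof.
move=> s0; pose R (e t : seq nat) := t \in rotations e.
have -> : [seq period e | e <- E_set n s] =
          [seq count (R e) (comps s (n - s)) | e <- E_set n s].
  by apply/eq_in_map => e eE; rewrite count_rotations_comps.
rewrite sumn_count_swap.
have -> : [seq count (R^~ t) (E_set n s) | t <- comps s (n - s)] =
          [seq 1 | _ <- comps s (n - s)].
  by apply/eq_in_map => t tC; rewrite /= count_E_set_rotations.
by rewrite sumnE big_map sum1_size.
Qed.

Lemma dvdn_size_mul_period (e : seq nat) : size e %| (size e + sumn e) * period e.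
Proof.
case: (posnP (size e)) => [/size0nil-> //|e0].
have [/andP[p0 _] /andP[pe /eqP ee] _] := period_spec e0.
set p := period e in p0 pe ee *; set b := take p e in ee.
have sizeE : size e = size e %/ p * p by rewrite divnK.
have sumE : sumn e = size e %/ p * sumn b.
  by rewrite [in LHS]ee sumn_flatten map_nseq sumn_nseq mulnC.
have -> : (size e + sumn e) * p = size e * (p + sumn b).
  by rewrite sumE {1 3}sizeE; nia.
exact: dvdn_mulr.
Qed.

Lemma sum_dval_E_set n s : 0 < s <= n ->
  sumn [seq dval n s e | e <- E_set n s] = 'C(n, s).
Proof.
case/andP=> s0 sn; apply/eqP; rewrite -(eqn_pmul2r s0); apply/eqP.
transitivity (n * sumn [seq period e | e <- E_set n s]).
  rewrite !sumnE !big_map big_distrl big_distrr /=; apply: eq_big_seq => e.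
  rewrite mem_E_set => /and3P[/eqP es /eqP en _]; rewrite /dval divnK //.
  by have := dvdn_size_mul_period e; rewrite es en subnKC.
rewrite sum_period_E_set // -(prednK s0) size_comps prednK //.
by rewrite (_ : n - s + s.-1 = n.-1) ?mul_bin_diag ?prednK 1?mulnC //; lia.
Qed.

Lemma phiE t i : i <= size t -> phi t i.+1 = sumn (take i t) + i.
Proof.
move=> it; rewrite /phi succnK sumnE big_map.
under eq_bigr do rewrite -addn1.
rewrite big_split /= sum1_size size_iota -(big_map (nth 0 t) xpredT id) -sumnE.
by rewrite map_nth_iota0.
Qed.

Definition offsets (t : seq nat) := [seq phi t i | i <- iota 1 (size t)].

Lemma offsetsE t : offsets t = [seq sumn (take i t) + i | i <- iota 0 (size t)].
Proof.
rewrite /offsets -[1]/(1 + 0) iotaDl -map_comp; apply/eq_in_map => i.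
by rewrite mem_iota /= add1n => it; rewrite phiE // ltnW.
Qed.

Lemma sumn_take_leq t i j : i <= j -> sumn (take i t) <= sumn (take j t).
Proof. by move=> ij; rewrite -(subnKC ij) takeD sumn_cat leq_addr. Qed.

Lemma sorted_offsets t : sorted ltn (offsets t).
Proof.
rewrite offsetsE; apply: homo_sorted (iota_ltn_sorted 0 _) => i j ij.
by have := sumn_take_leq t (ltnW ij); lia.
Qed.

Lemma offsets_ltn t a : a \in offsets t -> a < size t + sumn t.
Proof.
rewrite offsetsE => /mapP[i]; rewrite mem_iota /= => it ->.
by have := sumn_take_leq t (ltnW it); rewrite take_size; lia.
Qed.

Lemma offsets_inj t t' : size t = size t' -> sumn t = sumn t' ->
  offsets t = offsets t' -> t = t'.
Proof.
rewrite !offsetsE => st sumt; rewrite st => eo.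
have prefix k : k <= size t' -> sumn (take k t) = sumn (take k t').
  rewrite leq_eqVlt => /orP[/eqP->|kt]; first by rewrite -{1}st !take_size.
  by have := congr1 (nth 0 ^~ k) eo; rewrite !(nth_map 0) ?size_iota // nth_iota // => /addIn.
apply: (eq_from_nth (x0 := 0) st) => k; rewrite st => kt.
have := prefix k.+1 kt; rewrite !(take_nth 0) ?st // -!cats1 !sumn_cat prefix 1?ltnW //=.
lia.
Qed.

Lemma modrep_mod n y : modrep n y %% n = y %% n.
Proof. by rewrite /modrep; case: eqP => [->|]; rewrite ?modnn ?modn_mod. Qed.

Lemma modrep_small n x : 0 < x <= n -> modrep n x = x.
Proof.
case/andP=> x0 xn; rewrite /modrep; case: (ltngtP x n) xn => // [xn|->] _.
  by rewrite modn_small // ifN -?lt0n.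
by rewrite modnn.
Qed.

Lemma modrep_addn_inj n x a b : a < n -> b < n ->
  modrep n (x + a) = modrep n (x + b) -> a = b.
Proof.
move=> an bn /(congr1 (modn^~ n)); rewrite !modrep_mod => /eqP.
by rewrite eqn_modDl !modn_small // => /eqP.
Qed.

Lemma mem_coalition n x t : 0 < x <= n -> 0 < size t ->
  coalition n x t =i [seq modrep n (x + a) | a <- offsets t].
Proof.
move=> xn t0 y; rewrite mem_sort mem_undup /offsets -map_comp -(prednK t0) /=.
by rewrite addn0 modrep_small.
Qed.

Lemma coalition_inj n s x t t' : s <= n -> 0 < x <= n -> is_IA n s t -> is_IA n s t' ->
  coalition n x t = coalition n x t' -> t = t'.
Proof.
move=> sn xn.
suff sub u u' : is_IA n s u -> is_IA n s u' -> coalition n x u = coalition n x u' ->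
    {subset offsets u <= offsets u'}.
  move=> tIA t'IA ctt'.
  move: (tIA) (t'IA) => /andP[/eqP st /eqP sumt] /andP[/eqP st' /eqP sumt'].
  apply: offsets_inj; rewrite ?st ?st' ?sumt ?sumt' //.
  apply: (irr_sorted_eq ltn_trans ltnn); rewrite ?sorted_offsets // => a.
  by apply/idP/idP; apply: sub.
rewrite /is_IA => /andP[/eqP su /eqP sumu] /andP[/eqP su' /eqP sumu'] cuu' a au.
have u0 : 0 < size u by move: au; rewrite offsetsE; case: (size u).
have : modrep n (x + a) \in coalition n x u'.
  by rewrite -cuu' mem_coalition // (map_f (fun b => modrep n (x + b))).
rewrite mem_coalition ?su' -?su // => /mapP[b bu' /modrep_addn_inj ->] //.
- by have := offsets_ltn au; rewrite su sumu subnKC.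
- by have := offsets_ltn bu'; rewrite su' sumu' subnKC.
Qed.

Lemma count_residue_iota n r h d : r < n -> d <= n ->
  count (fun k => k %% n == r) (iota h d) = ((r + n - h %% n) %% n < d).
Proof.
move=> rn dn; have n0 : 0 < n by lia.
(* [h + m] is the unique [k] in [[h, h + n)] with [k = r %[mod n]]. *)
set m := (r + n - h %% n) %% n.
have hm : (h + m) %% n = r.
  have hn : h %% n <= r + n by rewrite ltnW // ltn_addl // ltn_pmod.
  by rewrite modnDmr {1}(divn_eq h n) -addnA modnMDl (subnKC hn) modnDr modn_small.
rewrite -[h in iota h]addn0 iotaDl count_map.
rewrite (eq_in_count (a2 := pred1 m)) => [|i]; last first.
  rewrite mem_iota /= -{1}hm => id; rewrite eqn_modDl modn_small ?modn_small //; lia.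
by rewrite count_uniq_mem ?iota_uniq // mem_iota.
Qed.

Lemma count_residue_iota_muln n r q : r < n ->
  count (fun k => k %% n == r) (iota 0 (q * n)) = q.
Proof.
move=> rn; elim: q => [//|q IH].
rewrite mulSnr iotaD count_cat IH add0n count_residue_iota //.
by rewrite modnMl subn0 modnDr modn_small // rn addn1.
Qed.

Lemma count_residue_iota0 n r D : r < n ->
  count (fun k => k %% n == r) (iota 0 D) = D %/ n + (r < D %% n).
Proof.
move=> rn; have n0 : 0 < n by lia.
rewrite {1}(divn_eq D n) iotaD count_cat count_residue_iota_muln // add0n.
rewrite count_residue_iota ?modnMl ?subn0 ?modnDr ?(modn_small rn) //.
exact/ltnW/ltn_pmod.
Qed.

Lemma ceil_divE D n : 0 < n -> ceil_div D n = D %/ n + (0 < D %% n).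
Proof.
move=> n0; rewrite /ceil_div {1}(divn_eq D n) -addnA divnMDl //; congr (_ + _).
have := ltn_pmod D n0; case: posnP => [->|Dn0] Dn; first by rewrite divn_small // prednK.
by rewrite (_ : D %% n + n.-1 = 1 * n + (D %% n).-1) ?divnMDl ?divn_small //; lia.
Qed.

Lemma hvalS n s ts j : hval n s ts j.+1 = hval n s ts j + dval n s (nth [::] ts j).
Proof. by rewrite /hval -addn1 iotaD map_cat sumn_cat /= addn0. Qed.

Lemma designatedE n s ts x j : 0 < n -> 0 < x ->
  designated n s ts x j =
  ((x.-1 + n - hval n s ts j %% n) %% n < dval n s (nth [::] ts j)).
Proof.
move=> n0 x0; rewrite /designated; set h := hval n s ts j.
have hn := ltn_pmod h n0.
have -> : (x%:Z - 1 - h%:Z = (- (h %/ n)%:Z - 1) * n%:Z + (x.-1 + n - h %% n)%:Z)%R.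
  by rewrite {1}(divn_eq h n); lia.
by rewrite modzMDl modz_nat ltz_nat.
Qed.

Lemma count_designated n s ts x K : 0 < x <= n ->
  (forall j, j < K -> dval n s (nth [::] ts j) <= n) ->
  count (designated n s ts x) (iota 0 K) =
  count (fun k => k %% n == x.-1) (iota 0 (hval n s ts K)).
Proof.
case/andP=> x0 xn; elim: K => [//|K IH] dn.
rewrite hvalS iotaD -[K.+1]addn1 iotaD !count_cat IH => [|j jK]; last by apply: dn; lia.
congr (_ + _); rewrite /= addn0 designatedE ?count_residue_iota ?dn //; lia.
Qed.

Lemma P_set_subset n s : {subset P_set n s <= E_set n s}.
Proof. by move=> e; rewrite mem_filter => /andP[]. Qed.

Lemma period_E_set n s e : e \in E_set n s -> period e <= s.
Proof.
rewrite mem_E_set => /andP[/eqP <- _].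
by case: (posnP (size e)) => [/size0nil-> //|/period_spec[/andP[]]].
Qed.

Lemma dval_E_set n s e : e \in E_set n s -> dval n s e <= n.
Proof.
move=> eE; case: (posnP s) => [->|s0]; first by rewrite /dval divn0.
by rewrite /dval -{2}(mulnK n s0) leq_div2r // leq_mul2l (period_E_set eE) orbT.
Qed.

Lemma dval_aperiodic n s e : 0 < s -> period e = s -> dval n s e = n.
Proof. by move=> s0 es; rewrite /dval es mulnK. Qed.

Lemma hval_size n s ts : hval n s ts (size ts) = sumn [seq dval n s t | t <- ts].
Proof. by rewrite /hval -[in RHS](mkseq_nth [::] ts) /mkseq -map_comp. Qed.

Lemma binomial_A_set_hval n s ts : 0 < s <= n -> perm_eq ts (P_set n s) ->
  'C(n, s) = size (A_set n s) * n + hval n s ts (size ts).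
Proof.
move=> sn pts; have s0 : 0 < s by case/andP: sn.
have PE : P_set n s = [seq e <- E_set n s | period e != s].
  by apply: eq_in_filter => e eE; rewrite ltn_neqAle (period_E_set eE) andbT.
rewrite hval_size (perm_sumn (perm_map _ pts)) -sum_dval_E_set // PE !sumnE !big_map.
rewrite (bigID (fun e => period e == s)) big_filter /=; congr (_ + _).
rewrite -big_filter -/(A_set n s) big_seq (eq_bigr (fun=> n)) => [|e].
  by rewrite -big_seq big_const_seq count_predT iter_addn_0 mulnC.
by rewrite mem_filter => /andP[/eqP es _]; rewrite dval_aperiodic.
Qed.

Lemma size_CV n s ts x : 0 < s <= n -> 0 < x <= n -> uniq ts -> {subset ts <= P_set n s} ->
  size (CV n s ts x) = size (A_set n s) + count (designated n s ts x) (iota 0 (size ts)).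
Proof.
move=> /andP[s0 sn] xn uts tsP.
set L := [seq j <- iota 0 (size ts) | designated n s ts x j].
have LP : {subset map (nth [::] ts) L <= P_set n s}.
  move=> e /mapP[j]; rewrite mem_filter mem_iota => /andP[_ /= jts] ->.
  exact/tsP/mem_nth.
have uL : uniq (map (nth [::] ts) L).
  rewrite map_inj_in_uniq ?filter_uniq ?iota_uniq // => i j.
  rewrite !mem_filter !mem_iota => /andP[_ /= its] /andP[_ /= jts] /eqP.
  by rewrite nth_uniq // => /eqP.
have disjAL : ~~ has (mem (A_set n s)) (map (nth [::] ts) L).
  apply/hasP=> -[e /LP]; rewrite mem_filter => /andP[pe _].
  by rewrite inE mem_filter => /andP[/eqP pe' _]; rewrite pe' ltnn in pe.
have subE : {subset A_set n s ++ map (nth [::] ts) L <= E_set n s}.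
  by move=> e; rewrite mem_cat => /orP[|/LP/P_set_subset] //; rewrite mem_filter => /andP[].
have -> : CV n s ts x = undup (map (coalition n x) (A_set n s ++ map (nth [::] ts) L)).
  by rewrite /CV map_cat -map_comp.
rewrite undup_id ?size_map ?size_cat ?size_map ?size_filter //.
have uA : uniq (A_set n s) := filter_uniq _ (uniq_E_set n s).
rewrite map_inj_in_uniq ?cat_uniq ?uA ?uL ?disjAL // => e e' /subE eE /subE e'E.
move: eE e'E; rewrite !mem_E_set => /and3P[es en _] /and3P[e's e'n _].
by apply: (@coalition_inj n s x); rewrite // /is_IA ?es ?en ?e's ?e'n.
Qed.

Theorem theorem9 (n s : nat) (ts : seq (seq nat)) :
  1 <= n -> 1 <= s <= n ->
  uniq ts -> perm_eq ts (P_set n s) ->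
  forall x : nat, 1 <= x <= n ->
    ('C(n, s) %/ n <= size (CV n s ts x)) && (size (CV n s ts x) <= ceil_div 'C(n, s) n).
Proof.
move=> n0 sn uts pts x xn.
have tsP : {subset ts <= P_set n s} by move=> t; rewrite (perm_mem pts).
have dts j : j < size ts -> dval n s (nth [::] ts j) <= n.
  by move=> jts; apply/(@dval_E_set n s)/P_set_subset/tsP/mem_nth.
have x1n : x.-1 < n by case/andP: xn => x0 xn'; rewrite prednK.
rewrite size_CV // count_designated // count_residue_iota0 // ceil_divE //.
rewrite (binomial_A_set_hval sn pts) (divnMDl _ _ n0) modnMDl -!addnA.
by rewrite !leq_add2l leq_addr /=; case: posnP => [->|_]; rewrite ?leq_b1.
Qed.
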